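(* For all integers $1\le t\le n$, the $t$-path ideal $I=I_t(L_n)$ is normal, i.e. $\overline{I^s}=I^s$ for all $s\ge 1$ (where $\overline{J}$ denotes the integral closure of $J$).
   Context: $K$ is a field, $S=K[x_1,\ldots,x_n]$, and $I_t(L_n)=(u_1,\ldots,u_{n-t+1})$ with $u_i=x_ix_{i+1}\cdots x_{i+t-1}$ (the $t$-path ideal of the line graph $L_n$ with edges $\{x_j,x_{j+1}\}$). *)

From HB Require Import structures.
From mathcomp Require Import all_boot all_order all_algebra.
From mathcomp Require Import mpoly.
Set Implicit Arguments. Unset Strict Implicit. Unset Printing Implicit Defensive.
Import GRing.Theory.
Local Open Scope ring_scope.

Definition gen_ideal (R : comNzRingType) (A : R -> Prop) : R -> Prop :=
  fun f => exists s : seq (R * R),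
    (forall p, p \in s -> A p.2) /\ f = \sum_(p <- s) p.1 * p.2.

Definition ideal_pow (R : comNzRingType) (J : R -> Prop) (s : nat) : R -> Prop :=
  gen_ideal (fun g => exists l : seq R,
     size l = s /\ (forall a, a \in l -> J a) /\ g = \prod_(a <- l) a).

Definition integral_closure (R : comNzRingType) (J : R -> Prop) : R -> Prop :=
  fun f => exists m : nat, (0 < m)%N /\ exists a : nat -> R,
    (forall i, (1 <= i <= m)%N -> ideal_pow J i (a i)) /\
    f ^+ m + \sum_(1 <= i < m.+1) a i * f ^+ (m - i) = 0.

(* The variables x_1,...,x_n of S = K[x_1..x_n] are 'X_j, j : 'I_n
   (0-based: x_{j+1} = 'X_j). *)
(* u_{i+1} = x_{i+1} x_{i+2} ... x_{i+t}  (0-based i), i.e. the product of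
   'X_j for i <= j < i + t. *)
Definition path_mon (K : fieldType) (n t i : nat) : {mpoly K[n]} :=
  \prod_(j < n | (i <= j < i + t)%N) 'X_j.

Definition path_gens (K : fieldType) (n t : nat) : seq {mpoly K[n]} :=
  [seq path_mon K n t i | i <- iota 0 (n - t + 1)].

Definition path_ideal (K : fieldType) (n t : nat) : {mpoly K[n]} -> Prop :=
  gen_ideal (fun g => g \in path_gens K n t).

Arguments path_mon K n t i : clear implicits.
Arguments path_gens K n t : clear implicits.
Arguments path_ideal K n t : clear implicits.

From HB Require Import structures.
From mathcomp Require Import all_boot all_order all_algebra.
From mathcomp Require Import mpoly.
From mathcomp Require Import zify.
Set Implicit Arguments. Unset Strict Implicit. Unset Printing Implicit Defensive.
Import GRing.Theory.
Local Open Scope ring_scope.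

(* Call Y a cover if it meets the support of every generator u_i, and grade
   S by the Y-degree of monomials.  Every u_i has Y-degree >= 1, and comparing
   lowest-degree parts in an integral equation shows that every monomial of an
   f integral over I^s has Y-degree >= s.  Conversely, a monomial x^m of
   Y-degree >= s for every cover Y lies in I^s: if w(k) is the least m-weight
   of a set meeting the first k windows, taking window i with multiplicity
   w(i+1) - w(i) uses x_j at most m_j times and yields w(n-t+1) >= s factors
   u_i, since the windows containing j are consecutive. *)

Section GeneratedIdeal.
Variable R : comNzRingType.
Implicit Types (A : R -> Prop) (f g : R).

Lemma mem_gen_ideal A a : A a -> gen_ideal A a.
Proof.
move=> Aa; exists [:: (1, a)]; split; last by rewrite big_seq1 mul1r.
by move=> p; rewrite inE => /eqP->.
Qed.

Lemma gen_ideal0 A : gen_ideal A 0.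
Proof. by exists [::]; rewrite big_nil. Qed.

Lemma gen_idealD A f g : gen_ideal A f -> gen_ideal A g -> gen_ideal A (f + g).
Proof.
move=> [s1 [H1 ->]] [s2 [H2 ->]]; exists (s1 ++ s2); split; last by rewrite big_cat.
by move=> p; rewrite mem_cat => /orP[/H1|/H2].
Qed.

Lemma gen_idealMl A r f : gen_ideal A f -> gen_ideal A (r * f).
Proof.
move=> [s [H ->]]; exists [seq (r * p.1, p.2) | p <- s]; split.
  by move=> p /mapP[q qs ->]; exact: (H q qs).
by rewrite big_map mulr_sumr; apply: eq_bigr => p _; rewrite mulrA.
Qed.

Lemma gen_ideal_sum A (I : eqType) (r : seq I) (F : I -> R) :
  (forall i, i \in r -> gen_ideal A (F i)) -> gen_ideal A (\sum_(i <- r) F i).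
Proof.
elim: r => [|x r IH] H; first by rewrite big_nil; exact: gen_ideal0.
rewrite big_cons; apply: gen_idealD; first by apply: H; rewrite inE eqxx.
by apply: IH => i ir; apply: H; rewrite inE ir orbT.
Qed.

Lemma ideal_pow1 A f : A f -> ideal_pow A 1 f.
Proof.
move=> Af; apply: mem_gen_ideal; exists [:: f]; split=> //; split; last by rewrite big_seq1.
by move=> a; rewrite inE => /eqP->.
Qed.

Lemma integral_closure_sub A f : A f -> integral_closure A f.
Proof.
move=> Af; exists 1%N; split=> //; exists (fun _ => - f); split.
  move=> i /andP[i_ge1 i_le1]; have -> : i = 1%N by apply/eqP; rewrite eqn_leq i_ge1 i_le1.
  by rewrite -mulN1r; apply: gen_idealMl; apply: ideal_pow1.
by rewrite big_nat1 subnn expr0 mulr1 expr1 subrr.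
Qed.

End GeneratedIdeal.

Section XDivisibility.
Variable R : comNzRingType.
Implicit Types p q : {poly R}.

Definition Xdvd k p := exists q, p = 'X^k * q.

Lemma Xdvd0 k : Xdvd k 0.
Proof. by exists 0; rewrite mulr0. Qed.

Lemma XdvdD k p q : Xdvd k p -> Xdvd k q -> Xdvd k (p + q).
Proof. by move=> [a ->] [b ->]; exists (a + b); rewrite mulrDr. Qed.

Lemma XdvdMl k r p : Xdvd k p -> Xdvd k (r * p).
Proof. by move=> [a ->]; exists (r * a); rewrite mulrCA. Qed.

Lemma XdvdM a b p q : Xdvd a p -> Xdvd b q -> Xdvd (a + b) (p * q).
Proof. by move=> [x ->] [y ->]; exists (x * y); rewrite exprD mulrACA. Qed.

Lemma Xdvd_leq a b p : (b <= a)%N -> Xdvd a p -> Xdvd b p.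
Proof.
by move=> ba [x ->]; exists ('X^(a - b) * x); rewrite mulrA -exprD subnKC.
Qed.

Lemma Xdvd_lowest p k : p`_k != 0 ->
  exists v q, [/\ (v <= k)%N, p = 'X^v * q & q`_0 != 0].
Proof.
move=> pk; have ex_nz : exists i, p`_i != 0 by exists k.
case: (ex_minnP ex_nz) => v pv v_min; exists v, (drop_poly v p); split.
- exact: v_min.
- rewrite mulrC -[LHS](poly_take_drop v) -[RHS]add0r; congr (_ + _).
  apply/polyP => i; rewrite coef_take_poly coef0; case: ltnP => // iv.
  by apply/eqP; apply: contraTT iv => /v_min; rewrite -leqNgt.
- by rewrite coef_drop_poly.
Qed.

End XDivisibility.

Section LowestOrder.
Variables (R : comNzRingType) (A : idomainType) (phi : {rmorphism R -> {poly A}}).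
Lemma Xdvd_gen_ideal (J : R -> Prop) k g :
  (forall a, J a -> Xdvd k (phi a)) -> gen_ideal J g -> Xdvd k (phi g).
Proof.
move=> phiJ [s [Js ->]]; rewrite rmorph_sum big_seq.
apply: (big_ind (Xdvd _)); [exact: Xdvd0 | exact: XdvdD |] => x xs.
by rewrite rmorphM; apply/XdvdMl/phiJ/Js.
Qed.

Lemma Xdvd_ideal_pow (J : R -> Prop) k i g :
  (forall a, J a -> Xdvd k (phi a)) -> ideal_pow J i g -> Xdvd (k * i) (phi g).
Proof.
move=> phiJ; apply: Xdvd_gen_ideal => _ [l [<- [Jl ->]]]; rewrite rmorph_prod.
elim: l Jl => [|y l IHl] Jl; first by rewrite big_nil muln0; exists 1; rewrite mulr1.
rewrite big_cons /= mulnS; apply: XdvdM; first by apply: phiJ; apply: Jl; rewrite inE eqxx.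
by apply: IHl => b bl; apply: Jl; rewrite inE bl orbT.
Qed.

(* If phi f = X^v q with q(0) != 0 and v < s, the term f^M of the integral
   equation has order exactly vM while every other term has order > vM. *)
Lemma integral_closure_Xorder (J : R -> Prop) s f v q :
  (forall a, J a -> Xdvd 1 (phi a)) -> integral_closure (ideal_pow J s) f ->
  phi f = 'X^v * q -> q`_0 != 0 -> (s <= v)%N.
Proof.
move=> phiJ [M [M_gt0 [a [Ja f_root]]]] fq q0; rewrite leqNgt; apply/negP => vs.
have high_terms : Xdvd (v * M).+1 (\sum_(1 <= i < M.+1) phi (a i * f ^+ (M - i))).
  rewrite big_nat_cond; apply: (big_ind (Xdvd _)); [exact: Xdvd0 | exact: XdvdD |].
  move=> i /andP[/andP[i_ge1 iM] _]; rewrite rmorphM rmorphXn fq.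
  have ai : Xdvd (s * i) (phi (a i)).
    apply: (Xdvd_ideal_pow _ (Ja i _)); last by rewrite i_ge1 -ltnS.
    by move=> b /(Xdvd_ideal_pow phiJ); rewrite mul1n.
  have fi : Xdvd (v * (M - i)) (('X^v * q) ^+ (M - i)).
    by exists (q ^+ (M - i)); rewrite exprMn -exprM.
  by apply: Xdvd_leq (XdvdM ai fi); nia.
have [r Er] := high_terms.
move: (congr1 phi f_root); rewrite rmorphD rmorph0 rmorphXn rmorph_sum Er fq.
rewrite exprMn -exprM exprSr -mulrA -mulrDr => /eqP.
rewrite mulf_eq0 expf_eq0 polyX_eq0 andbF /= => /eqP low_eq0.
move: (congr1 (fun p : {poly A} => p`_0) low_eq0).
rewrite /= coefD coefXM /= coef0 addr0 -!horner_coef0 horner_exp horner_coef0.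
by move/eqP; rewrite expf_eq0 (negbTE q0) andbF.
Qed.

End LowestOrder.

Section YGrading.
Variables (K : fieldType) (n : nat) (Y : {set 'I_n}).

Definition degY (m : 'X_{1..n}) : nat := (\sum_(j in Y) m j)%N.

Definition gradeY_var (j : 'I_n) : {poly {mpoly K[n]}} :=
  if j \in Y then ('X_j)%:P * 'X else ('X_j)%:P.

(* The substitution x_j |-> x_j T for j in Y: T records the Y-degree. *)
Definition gradeY : {rmorphism {mpoly K[n]} -> {poly {mpoly K[n]}}} :=
  mmap (@polyC _ \o @mpolyC n K) gradeY_var.

Lemma gradeY_X j : gradeY 'X_j = gradeY_var j.
Proof. by rewrite /gradeY /= mmapX mmap1U. Qed.

Lemma gradeY_monomial m : gradeY 'X_[m] = ('X_[m])%:P * 'X^(degY m).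
Proof.
rewrite /gradeY /= mmapX /mmap1 (eq_bigr (fun j =>
  ('X_j ^+ m j)%:P * 'X^(if j \in Y then m j else 0%N))); last first.
  move=> j _; rewrite /gradeY_var; case: (j \in Y); last by rewrite expr0 mulr1 rmorphXn.
  by rewrite exprMn rmorphXn.
by rewrite big_split /= -rmorph_prod -mpolyXE_id prodrXr /degY [in RHS]big_mkcond.
Qed.

Lemma coef_gradeY f k :
  (gradeY f)`_k = \sum_(m <- msupp f | degY m == k) f@_m *: 'X_[m].
Proof.
rewrite {1}[f]mpolyE raddf_sum coef_sum [in RHS]big_mkcond /=; apply: eq_bigr => m _.
rewrite /gradeY /= mmapZ -/gradeY gradeY_monomial mulrA /= -polyCM mul_mpolyC.
by rewrite coefMXn coefC subn_eq0; case: ltngtP.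
Qed.

Lemma coef_gradeY_neq0 f m : m \in msupp f -> (gradeY f)`_(degY m) != 0.
Proof.
move=> mf; apply/eqP => /(congr1 (mcoeff m)).
rewrite coef_gradeY raddf_sum raddf0 -big_filter (bigD1_seq m) /=; first last.
- exact: filter_uniq (msupp_uniq f).
- by rewrite mem_filter eqxx.
rewrite mcoeffZ mcoeffX eqxx mulr1 big1 ?addr0; first by apply/eqP; rewrite -mcoeff_msupp.
by move=> m' m'm; rewrite mcoeffZ mcoeffX (negbTE m'm) mulr0.
Qed.

End YGrading.

Definition in_window (t j : nat) : pred nat := fun i => (i <= j < i + t)%N.

Definition path_cover (n t k : nat) (Y : {set 'I_n}) : bool :=
  [forall i : 'I_(n - t + 1), (i < k)%N ==> [exists j in Y, in_window t j i]].

Lemma path_cover_le n t k k' (Y : {set 'I_n}) :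
  (k <= k')%N -> path_cover t k' Y -> path_cover t k Y.
Proof.
move=> kk' /forallP cover'; apply/forallP => i; apply/implyP => ik.
by have /implyP := cover' i; apply; apply: leq_trans kk'.
Qed.

Lemma path_coverT n t k : (1 <= t <= n)%N -> path_cover t k [set: 'I_n].
Proof.
move=> t_range; apply/forallP => i; apply/implyP => _.
have i_lt_n : (i < n)%N by have := ltn_ord i; lia.
by apply/existsP; exists (Ordinal i_lt_n); rewrite in_setT /in_window /=; lia.
Qed.

Section MinimalCover.
Variables (n t : nat) (t_range : (1 <= t <= n)%N) (m : 'X_{1..n}).
Local Notation N := (n - t + 1)%N.
Local Notation weight Y := (degY Y m).

Definition min_cover_weight k : nat :=
  weight [arg min_(Y < [set: 'I_n] | path_cover t k Y) weight Y].

Lemma min_cover_weight_le k (Y : {set 'I_n}) :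
  path_cover t k Y -> (min_cover_weight k <= weight Y)%N.
Proof.
by rewrite /min_cover_weight; case: arg_minnP => [|Z _ Zmin /Zmin //]; exact: path_coverT.
Qed.

Lemma min_cover_weight_attained k :
  exists2 Y, path_cover t k Y & min_cover_weight k = weight Y.
Proof.
by rewrite /min_cover_weight; case: arg_minnP => [|Z ? _]; [exact: path_coverT | exists Z].
Qed.

Lemma min_cover_weight_mono : {homo min_cover_weight : k k' / (k <= k')%N}.
Proof.
move=> k k' kk'; have [Y coverY ->] := min_cover_weight_attained k'.
exact/min_cover_weight_le/(path_cover_le kk').
Qed.

Lemma min_cover_weight0 : min_cover_weight 0 = 0%N.
Proof.
apply/eqP; rewrite -leqn0 (leq_trans (@min_cover_weight_le _ set0 _)) //.
  by apply/forallP.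
by rewrite /degY big_set0.
Qed.

(* The windows j + 1 - t, ..., j all contain j. *)
Lemma min_cover_weight_step (j : 'I_n) :
  (min_cover_weight (minn j.+1 N) <= min_cover_weight (j.+1 - t) + m j)%N.
Proof.
have [Y coverY ->] := min_cover_weight_attained (j.+1 - t).
apply: (@leq_trans (weight (j |: Y))).
  apply: min_cover_weight_le; apply/forallP => i; apply/implyP => ij.
  have [i_lo|i_hi] := ltnP i (j.+1 - t).
    move/forallP: coverY => /(_ i) /implyP /(_ i_lo) /existsP [j' /andP [j'Y hj']].
    by apply/existsP; exists j'; rewrite in_setU1 j'Y orbT.
  by apply/existsP; exists j; rewrite in_setU1 eqxx /in_window /=; lia.
have [jY|jY] := boolP (j \in Y); last by rewrite /degY big_setU1 //= addnC.
by rewrite (setUidPr (_ : [set j] \subset Y)) ?sub1set // leq_addr.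
Qed.

Definition greedy_packing : seq nat :=
  flatten [seq nseq (min_cover_weight i.+1 - min_cover_weight i) i | i <- index_iota 0 N].

Lemma size_greedy_packing : size greedy_packing = min_cover_weight N.
Proof.
rewrite size_flatten /shape -map_comp (eq_map (fun i => size_nseq _ _)) sumnE big_map.
by rewrite telescope_sumn ?min_cover_weight0 ?subn0 //; exact: min_cover_weight_mono.
Qed.

Lemma count_greedy_packing (j : 'I_n) : (count (in_window t j) greedy_packing <= m j)%N.
Proof.
rewrite count_flatten -map_comp (eq_map (fun i => count_nseq _ _ _)) sumnE big_map.
set lo := (j.+1 - t)%N; set hi := minn j.+1 N.
(* The windows containing j are those in [lo, hi), so the count telescopes. *)
pose w i := min_cover_weight (maxn lo (minn i hi)).
rewrite (@eq_big_nat _ _ _ 0 N _ (fun i => w i.+1 - w i)%N); last first.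
  move=> i /andP[_ iN]; rewrite /w /in_window.
  case: (boolP (i <= j < i + t)%N) => /= ij.
    have -> : maxn lo (minn i.+1 hi) = i.+1 by lia.
    have -> : maxn lo (minn i hi) = i by lia.
    by rewrite mul1n.
  have -> : maxn lo (minn i.+1 hi) = maxn lo (minn i hi) by lia.
  by rewrite subnn.
rewrite telescope_sumn; last by move=> x y xy; apply: min_cover_weight_mono; lia.
rewrite /w; have -> : maxn lo (minn N hi) = hi by have := ltn_ord j; lia.
have -> : maxn lo (minn 0 hi) = lo by lia.
have := min_cover_weight_step j; rewrite -/lo -/hi; lia.
Qed.

End MinimalCover.

Section PathIdeal.
Variables (K : fieldType) (n t : nat).

Lemma prod_path_mon (l : seq nat) :
  \prod_(i <- l) path_mon K n t i = \prod_(j < n) 'X_j ^+ count (in_window t j) l.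
Proof.
rewrite (eq_bigr (fun i => \prod_(j < n) 'X_j ^+ in_window t j i)); last first.
  move=> i _; rewrite /path_mon big_mkcond /=; apply: eq_bigr => j _.
  by rewrite /in_window; case: (i <= j < i + t)%N; rewrite ?expr1 ?expr0.
rewrite exchange_big /=; apply: eq_bigr => j _.
by rewrite prodrXr -sumn_count sumnE big_map.
Qed.

Lemma monomial_in_path_ideal_pow s (m : 'X_{1..n}) : (1 <= t <= n)%N ->
  (forall Y : {set 'I_n}, path_cover t (n - t + 1) Y -> (s <= degY Y m)%N) ->
  ideal_pow (path_ideal K n t) s 'X_[m].
Proof.
move=> t_range cover_heavy.
have [Y coverY weightY] := min_cover_weight_attained t_range m (n - t + 1).
set l := take s (greedy_packing t m).
have size_l : size l = s.
  by rewrite size_takel // size_greedy_packing // weightY; exact: cover_heavy.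
have count_l (j : 'I_n) : (count (in_window t j) l <= m j)%N.
  apply: leq_trans (count_greedy_packing t_range m j).
  by rewrite -[X in (_ <= count _ X)%N](cat_take_drop s) count_cat leq_addr.
have l_windows i : i \in l -> i \in iota 0 (n - t + 1).
  move/mem_take => /flattenP [_ /mapP [i' i'N ->]].
  by rewrite mem_nseq => /andP [_ /eqP ->]; rewrite /index_iota subn0 in i'N.
have -> : 'X_[m] = (\prod_(j < n) 'X_j ^+ (m j - count (in_window t j) l)) *
                   \prod_(i <- l) path_mon K n t i.
  rewrite prod_path_mon mpolyXE_id -big_split /=; apply: eq_bigr => j _.
  by rewrite -exprD subnK.
apply/gen_idealMl/mem_gen_ideal; exists [seq path_mon K n t i | i <- l].
split; first by rewrite size_map.
split; last by rewrite big_map.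
by move=> _ /mapP [i il ->]; apply/mem_gen_ideal/map_f/l_windows.
Qed.

Lemma Xdvd_gradeY_path_ideal (Y : {set 'I_n}) : path_cover t (n - t + 1) Y ->
  forall a, path_ideal K n t a -> Xdvd 1 (gradeY K Y a).
Proof.
move=> coverY a; apply: Xdvd_gen_ideal => _ /mapP [i iN ->].
move: iN; rewrite mem_iota add0n => iN.
move/forallP: coverY => /(_ (Ordinal iN)) /implyP /(_ iN) /existsP [j /andP [jY ij]].
rewrite /path_mon rmorph_prod (bigD1 j) //= gradeY_X /gradeY_var jY.
by exists (('X_j)%:P * \prod_(k < n | (i <= k < i + t)%N && (k != j)) gradeY K Y 'X_k);
  rewrite expr1 mulrAC mulrC mulrA.
Qed.

End PathIdeal.

Theorem corollary2p4 (K : fieldType) (n t : nat) :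
  (1 <= t)%N -> (t <= n)%N ->
  forall s : nat, (1 <= s)%N ->
  forall f : {mpoly K[n]},
    integral_closure (ideal_pow (path_ideal K n t) s) f <->
    ideal_pow (path_ideal K n t) s f.
Proof.
move=> t_gt0 t_le_n s _ f; split; last exact: integral_closure_sub.
move=> f_integral; rewrite [f]mpolyE; apply: gen_ideal_sum => m m_supp.
rewrite -mul_mpolyC; apply/gen_idealMl/monomial_in_path_ideal_pow; first by rewrite t_gt0.
move=> Y coverY; have [v [q [vm fq q0]]] := Xdvd_lowest (coef_gradeY_neq0 Y m_supp).
apply: leq_trans vm.
exact: integral_closure_Xorder (Xdvd_gradeY_path_ideal coverY) f_integral fq q0.
Qed.
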